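(* Let $\pi_3=2\int_0^1\frac{\mathrm{d}t}{\sqrt{1-t^6}}$ and let $\mathrm{sleaf}_3:\mathbb{R}\to\mathbb{R}$ be the leaf function of basis $3$. Let $m$ be an integer, $l$ real, $s=\mathrm{sleaf}_3(l)$, and $$A=\frac12\sqrt{-1-s^2+2s^4+\frac{2-2s^6}{\sqrt{1+s^2+s^4}}}.$$ (i) If $\frac{\pi_3}{2}(4m-1)\le l\le\frac{\pi_3}{2}(4m+1)$, then $\Bigl(\mathrm{sleaf}_3\Bigl(\frac l2\Bigr)\Bigr)^2=-\frac12 s^2+\frac12\sqrt{1+s^2+s^4}-A$. (ii) If $\frac{\pi_3}{2}(4m+1)\le l\le\frac{\pi_3}{2}(4m+3)$, then $\Bigl(\mathrm{sleaf}_3\Bigl(\frac l2\Bigr)\Bigr)^2=-\frac12 s^2+\frac12\sqrt{1+s^2+s^4}+A$.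
   Context: For a natural number $n$, the leaf function $\mathrm{sleaf}_n:\mathbb{R}\to\mathbb{R}$ is the solution of $\frac{\mathrm{d}^2r}{\mathrm{d}l^2}=-n\,r^{2n-1}$ with $r(0)=0$, $r'(0)=1$; it is periodic with period $2\pi_n$, where $\pi_n=2\int_0^1\frac{\mathrm{d}t}{\sqrt{1-t^{2n}}}$, and on $[-\pi_n/2,\pi_n/2]$ it is the inverse of $r\mapsto\int_0^r\frac{\mathrm{d}t}{\sqrt{1-t^{2n}}}$. *)

From Stdlib Require Import Reals Lra Lia ZArith.
From Coquelicot Require Import Coquelicot.
Open Scope R_scope.

Definition pi_n (n : nat) : R :=
  2 * RInt_gen (fun t => / sqrt (1 - t ^ (2 * n))) (at_point 0) (at_left 1).

(* r is the leaf function sleaf_n: the solution of r'' = - n r^(2n-1),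
   r(0) = 0, r'(0) = 1 on all of R (the solution exists and is unique). *)
Definition is_sleaf (n : nat) (r : R -> R) : Prop :=
  exists r' : R -> R,
    (forall x, is_derive r x (r' x)) /\
    (forall x, is_derive r' x (- INR n * r x ^ (2 * n - 1))) /\
    r 0 = 0 /\ r' 0 = 1.

(* With r = sleaf_3 and p = r', the system r' = p, p' = -3 r^5 conserves
   p^2 + r^6 = 1, and bounded solutions of it are determined by their value at
   one point (Gronwall).  Uniqueness yields the evenness of p, the reflection
   r(2T - x) = r(x) about the first zero T of p, hence p(x + 2T) = -p(x), and
   the duplication formula
     r(2y) = 2 r p / sqrt(1 + 8 r^6),  p(2y) = (1 - 20 r^6 - 8 r^12) / (1 + 8 r^6)^(3/2),
   since both sides solve the doubled equation a'' = -12 a^5.  T = pi_3 / 2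
   because r is increasing on [0, T] with r' = sqrt(1 - r^6).  Writing
   x = r(l/2)^2 and t = r(l)^2, the duplication formula gives
   t (1 + 8 x^3) = 4 x (1 - x^3), whose solution is
   x = -t/2 + sqrt(1 + t + t^2)/2 -+ |2x + t - sqrt(1 + t + t^2)|/2; the sign
   inside the absolute value is that of -p(l), which the periodicity of p
   reads off from l. *)

From Stdlib Require Import Reals ZArith Lra Lia.
From Coquelicot Require Import Coquelicot.
Open Scope R_scope.

Ltac derive_with_hyps :=
  auto_derive;
  repeat match goal with
  | |- _ /\ _ => split
  | |- True => exact I
  | |- ex_derive ?f ?y => match goal with
      H : forall z, is_derive _ z _ |- _ => exact (ex_intro _ _ (H y)) end
  | |- context [Derive ?f ?y] => match goal with
      H : forall z, is_derive _ z _ |- _ => rewrite (is_derive_unique f y _ (H y)) end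
  end.

Lemma continuity_pt_is_derive (f : R -> R) x l : is_derive f x l -> continuity_pt f x.
Proof.
  intros H. apply continuity_pt_filterlim, (ex_derive_continuous f x).
  now exists l.
Qed.

Lemma is_derive_nonpos_le (f df : R -> R) a b :
  a <= b -> (forall x, a <= x <= b -> is_derive f x (df x)) ->
  (forall x, a <= x <= b -> df x <= 0) -> f b <= f a.
Proof.
  intros Hab Hd Hneg.
  destruct (MVT_gen f a b df) as [c [Hc Heq]];
    unfold Rmin, Rmax in *; destruct Rle_dec; try lra.
  - intros x Hx. apply Hd. lra.
  - intros x Hx. apply (continuity_pt_is_derive _ _ (df x)), Hd. lra.
  - assert (df c <= 0) by (apply Hneg; lra). nra.
Qed.

Lemma is_derive_nonneg_le (f df : R -> R) a b :
  a <= b -> (forall x, a <= x <= b -> is_derive f x (df x)) ->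
  (forall x, a <= x <= b -> 0 <= df x) -> f a <= f b.
Proof.
  intros Hab Hd Hpos.
  enough (- f b <= - f a) by lra.
  apply (is_derive_nonpos_le (fun x => - f x) (fun x => - df x)); auto.
  - intros x Hx. apply (is_derive_opp f x (df x)), Hd, Hx.
  - intros x Hx. specialize (Hpos x Hx). lra.
Qed.

Lemma is_derive_zero_eq (f : R -> R) a b :
  a <= b -> (forall x, a <= x <= b -> is_derive f x 0) -> f a = f b.
Proof.
  intros Hab H. apply Rle_antisym.
  - apply (is_derive_nonneg_le f (fun _ => 0)); auto; intros; lra.
  - apply (is_derive_nonpos_le f (fun _ => 0)); auto; intros; lra.
Qed.

Lemma lipschitz_of_is_derive (f df : R -> R) L M :
  (forall x, Rabs x <= M -> is_derive f x (df x)) ->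
  (forall x, Rabs x <= M -> Rabs (df x) <= L) ->
  forall x y, Rabs x <= M -> Rabs y <= M -> Rabs (f x - f y) <= L * Rabs (x - y).
Proof.
  intros Hd Hb x y Hx Hy.
  apply Rabs_le_between in Hx, Hy.
  assert (between : forall c, Rmin y x <= c <= Rmax y x -> Rabs c <= M).
  { intros c Hc. apply Rabs_le. unfold Rmin, Rmax in Hc; destruct Rle_dec; lra. }
  destruct (MVT_gen f y x df) as [c [Hc ->]].
  - intros z Hz. apply Hd, between. lra.
  - intros z Hz. apply (continuity_pt_is_derive _ _ (df z)), Hd, between, Hz.
  - rewrite Rabs_mult. apply Rmult_le_compat_r; [apply Rabs_pos|]. apply Hb, between, Hc.
Qed.

Lemma quintic_lipschitz c M x y : Rabs x <= M -> Rabs y <= M ->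
  Rabs (c * x ^ 5 - c * y ^ 5) <= 5 * Rabs c * M ^ 4 * Rabs (x - y).
Proof.
  apply (lipschitz_of_is_derive (fun x => c * x ^ 5) (fun x => 5 * c * x ^ 4)).
  - intros z _. auto_derive; trivial. ring.
  - intros z Hz. rewrite !Rabs_mult, <- RPow_abs, (Rabs_pos_eq 5) by lra.
    apply Rmult_le_compat_l; [pose proof (Rabs_pos c); lra|].
    apply pow_incr. split; [apply Rabs_pos | exact Hz].
Qed.

Lemma gronwall_zero (E dE : R -> R) K t0 :
  (forall x, is_derive E x (dE x)) -> (forall x, Rabs (dE x) <= K * E x) ->
  (forall x, 0 <= E x) -> E t0 = 0 -> forall x, E x = 0.
Proof.
  intros Hd Hb Hpos H0 x.
  pose proof (Hpos x). pose proof (exp_pos (K * x)). pose proof (exp_pos (- K * x)).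
  destruct (Rle_dec t0 x).
  - assert (Hdecr : E x * exp (- K * x) <= E t0 * exp (- K * t0)).
    { apply (is_derive_nonpos_le (fun y => E y * exp (- K * y))
                                 (fun y => (dE y - K * E y) * exp (- K * y))); [lra| |].
      - intros y _. derive_with_hyps. ring.
      - intros y _. pose proof (exp_pos (- K * y)). pose proof (Hb y).
        pose proof (Rle_abs (dE y)). nra. }
    rewrite H0, Rmult_0_l in Hdecr. nra.
  - assert (Hincr : E x * exp (K * x) <= E t0 * exp (K * t0)).
    { apply (is_derive_nonneg_le (fun y => E y * exp (K * y))
                                 (fun y => (dE y + K * E y) * exp (K * y))); [lra| |].
      - intros y _. derive_with_hyps. ring.
      - intros y _. pose proof (exp_pos (K * y)). pose proof (Hb y).
        pose proof (Rle_abs (- dE y)). rewrite Rabs_Ropp in *. nra. }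
    rewrite H0, Rmult_0_l in Hincr. nra.
Qed.

Lemma second_order_uniqueness (F : R -> R) L M (a1 b1 a2 b2 : R -> R) t0 :
  0 <= L ->
  (forall x y, Rabs x <= M -> Rabs y <= M -> Rabs (F x - F y) <= L * Rabs (x - y)) ->
  (forall x, is_derive a1 x (b1 x)) -> (forall x, is_derive b1 x (F (a1 x))) ->
  (forall x, is_derive a2 x (b2 x)) -> (forall x, is_derive b2 x (F (a2 x))) ->
  (forall x, Rabs (a1 x) <= M) -> (forall x, Rabs (a2 x) <= M) ->
  a1 t0 = a2 t0 -> b1 t0 = b2 t0 -> forall x, a1 x = a2 x /\ b1 x = b2 x.
Proof.
  intros HL HF Ha1 Hb1 Ha2 Hb2 M1 M2 E1 E2 x.
  set (E := fun x => (a1 x - a2 x) ^ 2 + (b1 x - b2 x) ^ 2).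
  assert (HE : forall x, E x = 0).
  { apply (gronwall_zero E (fun x => 2 * (a1 x - a2 x) * (b1 x - b2 x)
                   + 2 * (b1 x - b2 x) * (F (a1 x) - F (a2 x))) (1 + L) t0).
    - intros y. unfold E. derive_with_hyps. ring.
    - intros y. unfold E.
      pose proof (HF _ _ (M1 y) (M2 y)) as Hlip.
      set (d := a1 y - a2 y) in *. set (e := b1 y - b2 y).
      set (q := F (a1 y) - F (a2 y)) in *.
      assert (Hde : 2 * Rabs d * Rabs e <= d ^ 2 + e ^ 2).
      { rewrite <- (pow2_abs d), <- (pow2_abs e).
        pose proof (pow2_ge_0 (Rabs d - Rabs e)). nra. }
      eapply Rle_trans; [apply Rabs_triang|].
      rewrite !Rabs_mult, (Rabs_pos_eq 2) by lra.
      pose proof (Rabs_pos d). pose proof (Rabs_pos e).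
      assert (Rabs e * Rabs q <= Rabs e * (L * Rabs d)) by (apply Rmult_le_compat_l; lra).
      nra.
    - intros y. unfold E.
      pose proof (pow2_ge_0 (a1 y - a2 y)). pose proof (pow2_ge_0 (b1 y - b2 y)). lra.
    - unfold E. rewrite E1, E2. ring. }
  specialize (HE x). unfold E in HE.
  pose proof (pow2_ge_0 (a1 x - a2 x)). pose proof (pow2_ge_0 (b1 x - b2 x)).
  split; nra.
Qed.

Lemma quintic_uniqueness c M (a1 b1 a2 b2 : R -> R) t0 :
  (forall x, is_derive a1 x (b1 x)) -> (forall x, is_derive b1 x (c * a1 x ^ 5)) ->
  (forall x, is_derive a2 x (b2 x)) -> (forall x, is_derive b2 x (c * a2 x ^ 5)) ->
  (forall x, Rabs (a1 x) <= M) -> (forall x, Rabs (a2 x) <= M) ->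
  a1 t0 = a2 t0 -> b1 t0 = b2 t0 -> forall x, a1 x = a2 x /\ b1 x = b2 x.
Proof.
  apply (second_order_uniqueness (fun a => c * a ^ 5) (5 * Rabs c * M ^ 4) M).
  - replace (M ^ 4) with ((M ^ 2) ^ 2) by ring.
    pose proof (Rabs_pos c). pose proof (pow2_ge_0 (M ^ 2)). nra.
  - exact (quintic_lipschitz c M).
Qed.

Lemma periodic_IZR (f : R -> R) P :
  (forall x, f (x + P) = f x) -> forall (m : Z) x, f (x + P * IZR m) = f x.
Proof.
  intros HP.
  assert (Hnat : forall (n : nat) x, f (x + P * INR n) = f x).
  { induction n as [|n IH]; intros x.
    - now rewrite Rmult_0_r, Rplus_0_r.
    - rewrite S_INR, <- (IH x), <- (HP (x + P * INR n)). f_equal. ring. }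
  intros m x. destruct (Z_le_gt_dec 0 m).
  - rewrite <- (Z2Nat.id m), <- INR_IZR_INZ by lia. apply Hnat.
  - replace m with (- Z.of_nat (Z.to_nat (- m)))%Z by lia.
    rewrite opp_IZR, <- INR_IZR_INZ, <- (Hnat (Z.to_nat (- m))). f_equal. ring.
Qed.

Lemma continuity_pt_pos_near (f : R -> R) a : continuity_pt f a -> 0 < f a ->
  exists d, 0 < d /\ forall x, Rabs (x - a) < d -> 0 < f x.
Proof.
  intros Hc Ha. destruct (Hc (f a) Ha) as [d [Hd Hnear]].
  exists d. split; [exact Hd|]. intros x Hx.
  destruct (Req_dec x a) as [->|Hne]; [exact Ha|].
  assert (Hfx : Rabs (f x - f a) < f a) by (apply Hnear; repeat split; auto).
  apply Rabs_def2 in Hfx. lra.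
Qed.

Lemma pow6_nonneg x : 0 <= x ^ 6.
Proof. replace (x ^ 6) with ((x ^ 2) ^ 3) by ring. apply pow_le, pow2_ge_0. Qed.

Definition pi3_integrand (t : R) : R := / sqrt (1 - t ^ 6).

Lemma pi3_integrand_continuous z : Rabs z < 1 -> continuous pi3_integrand z.
Proof.
  intros Hz. apply (ex_derive_continuous pi3_integrand z). unfold pi3_integrand.
  assert (z ^ 6 < 1).
  { replace (z ^ 6) with (Rabs z ^ 6) by (rewrite RPow_abs; apply Rabs_pos_eq, pow6_nonneg).
    apply pow_lt_1_compat; [split; [apply Rabs_pos | exact Hz] | lia]. }
  auto_derive. change (z * (z * (z * (z * (z * (z * 1)))))) with (z ^ 6).
  pose proof (sqrt_lt_R0 (1 - z ^ 6) ltac:(lra)). unfold Rminus in *. repeat split; lra.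
Qed.

Lemma is_derive_RInt_pi3_integrand c : Rabs c < 1 ->
  is_derive (fun c => RInt pi3_integrand 0 c) c (pi3_integrand c).
Proof.
  intros Hc. apply (is_derive_RInt _ _ 0); [|apply pi3_integrand_continuous, Hc].
  assert (Hd : 0 < (1 - Rabs c) / 2) by lra.
  exists (mkposreal _ Hd). intros y Hy. change (Rabs (y - c) < (1 - Rabs c) / 2) in Hy.
  apply (@RInt_correct R_CompleteNormedModule), (@ex_RInt_continuous R_CompleteNormedModule).
  intros t Ht. apply pi3_integrand_continuous.
  assert (Hy1 : Rabs y < 1) by (pose proof (Rabs_triang_inv y c); lra).
  apply Rabs_def2 in Hy1.
  unfold Rmin, Rmax in Ht. destruct Rle_dec; apply Rabs_def1; lra.
Qed.

Section Leaf3.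

Variables r p : R -> R.
Hypothesis r_derive : forall x, is_derive r x (p x).
Hypothesis p_derive : forall x, is_derive p x (-3 * r x ^ 5).
Hypothesis r_0 : r 0 = 0.
Hypothesis p_0 : p 0 = 1.

Lemma leaf_energy x : p x ^ 2 + r x ^ 6 = 1.
Proof.
  assert (conserved : forall y, is_derive (fun y => p y ^ 2 + r y ^ 6) y 0).
  { intros y. derive_with_hyps. ring. }
  replace (p x ^ 2 + r x ^ 6) with (p 0 ^ 2 + r 0 ^ 6); [rewrite r_0, p_0; ring|].
  destruct (Rle_dec 0 x); [|symmetry];
    apply (is_derive_zero_eq (fun y => p y ^ 2 + r y ^ 6)); auto; lra.
Qed.

Lemma leaf_abs_r_le1 x : Rabs (r x) <= 1.
Proof.
  destruct (Rle_dec (Rabs (r x)) 1) as [|Hgt]; [assumption|exfalso].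
  pose proof (Rlt_pow_R1 (Rabs (r x)) 6 ltac:(lra) ltac:(lia)) as Hpow.
  rewrite RPow_abs, Rabs_pos_eq in Hpow by apply pow6_nonneg.
  pose proof (leaf_energy x). pose proof (pow2_ge_0 (p x)). lra.
Qed.

Lemma leaf_abs_p_le1 x : Rabs (p x) <= 1.
Proof.
  pose proof (leaf_energy x). pose proof (pow6_nonneg (r x)).
  apply Rabs_le. nra.
Qed.

Lemma leaf_p_even x : p (- x) = p x.
Proof.
  refine (proj2 (quintic_uniqueness (-3) 1 (fun x => - r (- x)) (fun x => p (- x)) r p 0
                   _ _ r_derive p_derive _ leaf_abs_r_le1 _ _ x)).
  - intros y. derive_with_hyps. ring.
  - intros y. derive_with_hyps. ring.
  - intros y. rewrite Rabs_Ropp. apply leaf_abs_r_le1.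
  - rewrite Ropp_0, r_0. ring.
  - now rewrite Ropp_0.
Qed.

Definition double_scale (y : R) : R := / sqrt (1 + 8 * r y ^ 6).

Lemma double_scale_radicand_pos y : 0 < 1 + 8 * r y ^ 6.
Proof. pose proof (pow6_nonneg (r y)). lra. Qed.

Lemma double_scale_derive y :
  is_derive double_scale y (-24 * r y ^ 5 * p y * double_scale y ^ 3).
Proof.
  unfold double_scale. pose proof (double_scale_radicand_pos y) as Hpos.
  pose proof (sqrt_lt_R0 _ Hpos).
  derive_with_hyps;
    change (r y * (r y * (r y * (r y * (r y * (r y * 1)))))) with (r y ^ 6); try lra.
  field. lra.
Qed.

Lemma double_scale_sq y : double_scale y ^ 2 * (1 + 8 * r y ^ 6) = 1.
Proof.
  unfold double_scale. pose proof (double_scale_radicand_pos y).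
  rewrite pow_inv, <- Rsqr_pow2, Rsqr_sqrt by lra. field. lra.
Qed.

Lemma double_scale_range y : 0 < double_scale y <= 1.
Proof.
  unfold double_scale. pose proof (double_scale_radicand_pos y).
  assert (1 <= sqrt (1 + 8 * r y ^ 6)).
  { rewrite <- sqrt_1 at 1. apply sqrt_le_1_alt. pose proof (pow6_nonneg (r y)). lra. }
  split; [apply Rinv_0_lt_compat; lra|].
  rewrite <- Rinv_1 at 2. apply Rinv_le_contravar; lra.
Qed.

Lemma leaf_double y :
  r (2 * y) = 2 * r y * p y * double_scale y /\
  p (2 * y) = (1 - 20 * r y ^ 6 - 8 * r y ^ 12) * double_scale y ^ 3.
Proof.
  enough (H : r (2 * y) = 2 * r y * p y * double_scale y /\
              2 * p (2 * y) = 2 * (1 - 20 * r y ^ 6 - 8 * r y ^ 12) * double_scale y ^ 3)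
    by (destruct H; split; lra).
  pose proof leaf_energy as energy. pose proof double_scale_sq as z_sq.
  pose proof double_scale_derive as z_derive. pose proof double_scale_range as z_range.
  set (z := double_scale) in *. clearbody z.
  apply (quintic_uniqueness (-12) 2 (fun y => r (2 * y)) (fun y => 2 * p (2 * y))
    (fun y => 2 * r y * p y * z y) (fun y => 2 * (1 - 20 * r y ^ 6 - 8 * r y ^ 12) * z y ^ 3) 0).
  - intros x. derive_with_hyps. ring.
  - intros x. derive_with_hyps. ring.
  - intros x. derive_with_hyps.
    transitivity (2 * (1 - 20 * r x ^ 6 - 8 * r x ^ 12) * z x ^ 3
      + (p x ^ 2 + r x ^ 6 - 1) * (2 * z x - 48 * r x ^ 6 * z x ^ 3)
      - (2 - 8 * r x ^ 6) * z x * (z x ^ 2 * (1 + 8 * r x ^ 6) - 1)); [ring|].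
    rewrite energy, z_sq. ring.
  - intros x. derive_with_hyps.
    transitivity (-12 * (2 * r x * p x * z x) ^ 5
      + 384 * r x ^ 5 * p x * z x ^ 5 * (p x ^ 2 + 1 - r x ^ 6) * (p x ^ 2 + r x ^ 6 - 1)
      + r x ^ 5 * p x * z x ^ 3 * (240 + 192 * r x ^ 6) * (z x ^ 2 * (1 + 8 * r x ^ 6) - 1));
      [ring|].
    rewrite energy, z_sq. ring.
  - intros x. pose proof (leaf_abs_r_le1 (2 * x)). lra.
  - intros x. pose proof (leaf_abs_r_le1 x). pose proof (leaf_abs_p_le1 x).
    pose proof (z_range x).
    rewrite !Rabs_mult, (Rabs_pos_eq 2), (Rabs_pos_eq (z x)) by lra.
    pose proof (Rabs_pos (r x)). pose proof (Rabs_pos (p x)).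
    assert (Rabs (r x) * Rabs (p x) <= 1) by nra. nra.
  - rewrite Rmult_0_r, r_0. ring.
  - assert (z 0 = 1) as ->.
    { pose proof (z_sq 0) as Hz0. rewrite r_0 in Hz0. pose proof (z_range 0). nra. }
    rewrite Rmult_0_r, p_0, r_0. ring.
Qed.

(* r(1/2) >= 1/4, after which p' = -3 r^5 <= -3/1024 makes p vanish before
   1/2 + 1024/3. *)
Lemma leaf_p_pos_bounded b : (forall x, 0 <= x <= b -> 0 < p x) -> b <= 400.
Proof.
  intros p_pos. destruct (Rle_dec b (1 / 2)) as [|Hb]; [lra|].
  assert (r_mono : forall x y, 0 <= x <= y -> y <= b -> r x <= r y).
  { intros x y Hxy Hy. apply (is_derive_nonneg_le r p); try lra.
    - intros t _. apply r_derive.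
    - intros t Ht. pose proof (p_pos t ltac:(lra)). lra. }
  assert (p_ge_half : forall x, 0 <= x <= 1 / 2 -> 1 / 2 <= p x).
  { intros x Hx.
    assert (Hr : Rabs (r x - r 0) <= 1 * Rabs (x - 0)).
    { apply (lipschitz_of_is_derive r p 1 (1 / 2));
        [intros; apply r_derive | intros; apply leaf_abs_p_le1 | |];
        rewrite Rabs_pos_eq; lra. }
    pose proof (r_mono 0 x ltac:(lra) ltac:(lra)).
    rewrite r_0, !Rminus_0_r, !Rabs_pos_eq in Hr by lra.
    assert (r x ^ 6 <= (1 / 2) ^ 6) by (apply pow_incr; lra).
    pose proof (leaf_energy x). pose proof (p_pos x ltac:(lra)). nra. }
  assert (r_half : 1 / 4 <= r (1 / 2)).
  { assert (Hlin : r 0 - 0 / 2 <= r (1 / 2) - (1 / 2) / 2).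
    { apply (is_derive_nonneg_le (fun t => r t - t / 2) (fun t => p t - 1 / 2)); try lra.
      - intros t _. derive_with_hyps. field.
      - intros t Ht. pose proof (p_ge_half t Ht). lra. }
    rewrite r_0 in Hlin. lra. }
  assert (Hdecay : p b + 3 / 1024 * b <= p (1 / 2) + 3 / 1024 * (1 / 2)).
  { apply (is_derive_nonpos_le (fun t => p t + 3 / 1024 * t)
                               (fun t => -3 * r t ^ 5 + 3 / 1024)); try lra.
    - intros t _. derive_with_hyps. ring.
    - intros t Ht. pose proof (r_mono (1 / 2) t ltac:(lra) ltac:(lra)).
      assert ((1 / 4) ^ 5 <= r t ^ 5) by (apply pow_incr; lra). lra. }
  pose proof (p_pos b ltac:(lra)). pose proof (leaf_abs_p_le1 (1 / 2)) as Hp.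
  apply Rabs_le_between in Hp. lra.
Qed.

Lemma leaf_first_zero : exists T, 0 < T /\ (forall x, 0 <= x < T -> 0 < p x) /\ p T = 0.
Proof.
  set (S := fun b => 0 <= b /\ forall x, 0 <= x <= b -> 0 < p x).
  assert (p_cont : forall x, continuity_pt p x).
  { intros x. apply (continuity_pt_is_derive _ _ _ (p_derive x)). }
  destruct (completeness S) as [T [T_ub T_least]].
  - exists 400. intros b [_ Hb]. exact (leaf_p_pos_bounded b Hb).
  - exists 0. split; [lra|]. intros x Hx. replace x with 0 by lra. lra.
  - assert (T_pos : 0 < T).
    { destruct (continuity_pt_pos_near p 0 (p_cont 0)) as [d [Hd Hnear]]; [lra|].
      enough (S (d / 2)) by (pose proof (T_ub _ H); lra).
      split; [lra|]. intros x Hx. apply Hnear. rewrite Rabs_pos_eq; lra. }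
    assert (p_pos : forall x, 0 <= x < T -> 0 < p x).
    { intros x Hx. destruct (Rlt_dec 0 (p x)) as [|Hnpos]; [assumption|exfalso].
      enough (T <= x) by lra. apply T_least. intros b [_ Hb].
      destruct (Rle_dec b x) as [|Hbx]; [assumption|].
      exfalso. apply Hnpos, Hb. lra. }
    exists T. split; [exact T_pos|]. split; [exact p_pos|].
    destruct (Rtotal_order (p T) 0) as [Hneg|[Hzero|Hpos]]; [exfalso| exact Hzero |exfalso].
    + destruct (continuity_pt_pos_near (fun x => - p x) T) as [d [Hd Hnear]].
      * apply continuity_pt_opp, p_cont.
      * lra.
      * set (x := Rmax 0 (T - d / 2)).
        assert (Hx : 0 <= x < T) by (unfold x, Rmax; destruct Rle_dec; lra).
        assert (- p x > 0).
        { apply Hnear. unfold x, Rmax; destruct Rle_dec; rewrite Rabs_left; lra. }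
        pose proof (p_pos x Hx). lra.
    + destruct (continuity_pt_pos_near p T (p_cont T) Hpos) as [d [Hd Hnear]].
      assert (S (T + d / 2)).
      { split; [lra|]. intros x Hx. destruct (Rlt_dec x T); [apply p_pos; lra|].
        apply Hnear. rewrite Rabs_pos_eq; lra. }
      pose proof (T_ub _ H). lra.
Qed.

Section QuarterPeriod.

Variable T : R.
Hypothesis T_pos : 0 < T.
Hypothesis p_pos : forall x, 0 <= x < T -> 0 < p x.
Hypothesis p_T : p T = 0.

Lemma leaf_p_nonneg_0T x : 0 <= x <= T -> 0 <= p x.
Proof.
  intros Hx. destruct (Req_dec x T) as [->|]; [lra|].
  pose proof (p_pos x ltac:(lra)). lra.
Qed.

Lemma leaf_r_le x y : 0 <= x <= y -> y <= T -> r x <= r y.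
Proof.
  intros Hxy Hy. apply (is_derive_nonneg_le r p); try lra.
  - intros t _. apply r_derive.
  - intros t Ht. apply leaf_p_nonneg_0T. lra.
Qed.

Lemma leaf_r_T : r T = 1.
Proof.
  pose proof (leaf_r_le 0 T ltac:(lra) ltac:(lra)) as Hr. rewrite r_0 in Hr.
  pose proof (leaf_energy T) as E. rewrite p_T in E.
  pose proof (leaf_abs_r_le1 T) as Hle. rewrite Rabs_pos_eq in Hle by lra.
  destruct (Req_dec (r T) 1) as [|Hne]; [assumption|exfalso].
  pose proof (pow_lt_1_compat (r T) 6 ltac:(lra) ltac:(lia)). lra.
Qed.

Lemma leaf_p_antiperiodic x : p (x + 2 * T) = - p x.
Proof.
  assert (reflect : forall x, r (2 * T - x) = r x /\ - p (2 * T - x) = p x).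
  { apply (quintic_uniqueness (-3) 1 (fun x => r (2 * T - x)) (fun x => - p (2 * T - x)) r p T);
      try assumption.
    - intros y. derive_with_hyps. unfold Rminus. ring.
    - intros y. derive_with_hyps. unfold Rminus. ring.
    - intros y. apply leaf_abs_r_le1.
    - exact leaf_abs_r_le1.
    - now replace (2 * T - T) with T by ring.
    - replace (2 * T - T) with T by ring. rewrite p_T. ring. }
  destruct (reflect (- x)) as [_ H]. rewrite leaf_p_even in H.
  replace (2 * T - - x) with (x + 2 * T) in H by ring. lra.
Qed.

Lemma leaf_p_nonneg x : - T <= x <= T -> 0 <= p x.
Proof.
  intros Hx. destruct (Rle_dec 0 x).
  - apply leaf_p_nonneg_0T. lra.
  - rewrite <- leaf_p_even. apply leaf_p_nonneg_0T. lra.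
Qed.

Lemma leaf_p_sign (m : Z) x :
  (T * (4 * IZR m - 1) <= x <= T * (4 * IZR m + 1) -> 0 <= p x) /\
  (T * (4 * IZR m + 1) <= x <= T * (4 * IZR m + 3) -> p x <= 0).
Proof.
  assert (periodic : forall y, p (y + 4 * T * IZR m) = p y).
  { apply periodic_IZR. intros y.
    replace (y + 4 * T) with (y + 2 * T + 2 * T) by ring.
    rewrite !leaf_p_antiperiodic. ring. }
  split; intros Hx.
  - replace x with (x - 4 * T * IZR m + 4 * T * IZR m) by ring.
    rewrite periodic. apply leaf_p_nonneg. nra.
  - replace x with (x - 4 * T * IZR m - 2 * T + 2 * T + 4 * T * IZR m) by ring.
    rewrite periodic, leaf_p_antiperiodic.
    enough (0 <= p (x - 4 * T * IZR m - 2 * T)) by lra.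
    apply leaf_p_nonneg. nra.
Qed.

Lemma leaf_r_lt1 b : 0 <= b < T -> 0 <= r b < 1.
Proof.
  intros Hb. pose proof (leaf_r_le 0 b ltac:(lra) ltac:(lra)) as Hr. rewrite r_0 in Hr.
  split; [exact Hr|].
  pose proof (leaf_abs_r_le1 b) as Hle. rewrite Rabs_pos_eq in Hle by lra.
  destruct (Req_dec (r b) 1) as [Hone|]; [exfalso|lra].
  pose proof (leaf_energy b) as E. rewrite Hone, pow1 in E.
  pose proof (p_pos b Hb). nra.
Qed.

Lemma leaf_r_onto c : 0 <= c < 1 -> exists b, 0 <= b < T /\ r b = c.
Proof.
  intros Hc. destruct (IVT_gen r 0 T c) as [b [Hb Hrb]].
  - intros x. apply (continuity_pt_is_derive _ _ _ (r_derive x)).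
  - rewrite r_0, leaf_r_T. unfold Rmin, Rmax; destruct Rle_dec; lra.
  - unfold Rmin, Rmax in Hb; destruct Rle_dec; [|lra].
    exists b. split; [|exact Hrb]. split; [lra|].
    destruct (Req_dec b T) as [->|]; [rewrite leaf_r_T in Hrb; lra | lra].
Qed.

Lemma RInt_pi3_integrand_leaf b : 0 <= b < T -> RInt pi3_integrand 0 (r b) = b.
Proof.
  intros Hb.
  assert (Hinv : forall x, 0 <= x < T -> pi3_integrand (r x) = / p x).
  { intros x Hx. unfold pi3_integrand.
    replace (1 - r x ^ 6) with (p x ^ 2) by (rewrite <- (leaf_energy x); ring).
    rewrite sqrt_pow2; [reflexivity|]. pose proof (p_pos x Hx). lra. }
  enough (H : RInt pi3_integrand 0 (r 0) - 0 = RInt pi3_integrand 0 (r b) - b).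
  { rewrite r_0, RInt_point in H. unfold zero in H. simpl in H. lra. }
  apply (is_derive_zero_eq (fun b => RInt pi3_integrand 0 (r b) - b)); [lra|].
  intros x Hx.
  assert (Hval : p x * pi3_integrand (r x) - 1 = 0).
  { rewrite Hinv by lra. field. pose proof (p_pos x ltac:(lra)). lra. }
  enough (Hder : is_derive (fun b => RInt pi3_integrand 0 (r b) - b) x
                    (p x * pi3_integrand (r x) - 1)) by (rewrite Hval in Hder; exact Hder).
  apply (is_derive_minus (fun b => RInt pi3_integrand 0 (r b)) (fun b => b));
    [|exact (is_derive_id (K := R_AbsRing) x)].
  apply (is_derive_comp (fun c => RInt pi3_integrand 0 c) r); [|apply r_derive].
  apply is_derive_RInt_pi3_integrand.
  pose proof (leaf_r_lt1 x ltac:(lra)). rewrite Rabs_pos_eq; lra.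
Qed.

Lemma RInt_gen_pi3_integrand : RInt_gen pi3_integrand (at_point 0) (at_left 1) = T.
Proof.
  apply is_RInt_gen_unique.
  intros P [eps HP].
  set (d := Rmin (eps / 2) (T / 2)).
  assert (Hd : 0 < d /\ d <= eps / 2 /\ d <= T / 2).
  { unfold d, Rmin. destruct eps; simpl in *. destruct Rle_dec; lra. }
  destruct (leaf_r_lt1 (T - d)) as [Hrd0 Hrd1]; [lra|].
  apply (Filter_prod _ _ _ (fun a => a = 0) (fun c => r (T - d) < c < 1)).
  - reflexivity.
  - assert (Hgap : 0 < 1 - r (T - d)) by lra.
    exists (mkposreal _ Hgap). intros y Hy Hy1. change (Rabs (y - 1) < 1 - r (T - d)) in Hy.
    apply Rabs_def2 in Hy. lra.
  - intros a c -> Hc. simpl.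
    destruct (leaf_r_onto c) as [b [Hb <-]]; [lra|].
    exists (RInt pi3_integrand 0 (r b)). split.
    + apply (@RInt_correct R_CompleteNormedModule), (@ex_RInt_continuous R_CompleteNormedModule).
      intros t Ht. apply pi3_integrand_continuous.
      unfold Rmin, Rmax in Ht; destruct Rle_dec; apply Rabs_def1; lra.
    + rewrite RInt_pi3_integrand_leaf by exact Hb. apply HP.
      change (Rabs (b - T) < eps).
      assert (T - d < b).
      { destruct (Rlt_dec (T - d) b) as [|Hle]; [assumption|].
        pose proof (leaf_r_le b (T - d) ltac:(lra) ltac:(lra)). lra. }
      rewrite Rabs_left by lra. lra.
Qed.

End QuarterPeriod.

End Leaf3.

Lemma half_sq_identities x t :
  0 <= x -> 0 <= t -> t * (1 + 8 * x ^ 3) = 4 * x * (1 - x ^ 3) ->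
  let S := sqrt (1 + t + t ^ 2) in
  - 1 - t + 2 * t ^ 2 + (2 - 2 * t ^ 3) / S = (2 * x + t - S) ^ 2 /\
  (2 * x + t - S) * (2 * x + 1) = 2 * x ^ 2 + 2 * x - 1.
Proof.
  intros x_nonneg t_nonneg t_of_x S.
  assert (S_sq : 0 < 1 + t + t ^ 2) by nra.
  pose proof (sqrt_lt_R0 _ S_sq) as S_pos.
  pose proof (sqrt_sqrt _ (Rlt_le _ _ S_sq)) as S_S.
  fold S in S_pos, S_S. clearbody S.
  (* By [t_of_x], [(1 + t + t^2) (2x + 1)^2] is the square of [2x^2 + 2xt + 1 + t]. *)
  assert (S_of_x : S * (2 * x + 1) = 2 * x ^ 2 + 2 * x * t + 1 + t).
  { assert (H : (S * (2 * x + 1)) ^ 2 = (2 * x ^ 2 + 2 * x * t + 1 + t) ^ 2).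
    { replace ((S * (2 * x + 1)) ^ 2) with ((S * S) * (2 * x + 1) ^ 2) by ring.
      rewrite S_S. nra. }
    apply Rsqr_inj; [nra | nra | rewrite !Rsqr_pow2; exact H]. }
  split; [|nra].
  apply (Rmult_eq_reg_r S); [|lra].
  transitivity ((2 * x + t - S) ^ 2 * S + (2 * t - 2 - S) * (S * S - (1 + t + t ^ 2))
                + 2 * S * (S * (2 * x + 1) - (2 * x ^ 2 + 2 * x * t + 1 + t))).
  - field. lra.
  - rewrite S_S, S_of_x. ring.
Qed.

Lemma leaf3_half_sq u v s :
  v ^ 2 + u ^ 6 = 1 -> s = 2 * u * v / sqrt (1 + 8 * u ^ 6) ->
  let A := / 2 * sqrt (- 1 - s ^ 2 + 2 * s ^ 4
                       + (2 - 2 * s ^ 6) / sqrt (1 + s ^ 2 + s ^ 4)) in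
  (0 <= 1 - 20 * u ^ 6 - 8 * u ^ 12 ->
     u ^ 2 = - / 2 * s ^ 2 + / 2 * sqrt (1 + s ^ 2 + s ^ 4) - A) /\
  (1 - 20 * u ^ 6 - 8 * u ^ 12 <= 0 ->
     u ^ 2 = - / 2 * s ^ 2 + / 2 * sqrt (1 + s ^ 2 + s ^ 4) + A).
Proof.
  intros E Hs A. unfold A. clear A.
  replace (u ^ 6) with ((u ^ 2) ^ 3) in * by ring.
  replace (u ^ 12) with ((u ^ 2) ^ 6) by ring.
  replace (s ^ 4) with ((s ^ 2) ^ 2) by ring.
  replace (s ^ 6) with ((s ^ 2) ^ 3) by ring.
  assert (x_nonneg : 0 <= u ^ 2) by apply pow2_ge_0.
  assert (t_of_x : s ^ 2 * (1 + 8 * (u ^ 2) ^ 3) = 4 * u ^ 2 * (1 - (u ^ 2) ^ 3)).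
  { assert (H : 0 < 1 + 8 * (u ^ 2) ^ 3) by (pose proof (pow_le _ 3 x_nonneg); lra).
    pose proof (sqrt_lt_R0 _ H). pose proof (sqrt_sqrt _ (Rlt_le _ _ H)) as q_q.
    set (q := sqrt (1 + 8 * (u ^ 2) ^ 3)) in *.
    rewrite Hs, <- q_q. replace (1 - (u ^ 2) ^ 3) with (v ^ 2) by lra.
    field. lra. }
  destruct (half_sq_identities (u ^ 2) (s ^ 2) x_nonneg (pow2_ge_0 s) t_of_x)
    as [radicand sign_link].
  set (t := s ^ 2) in *. set (x := u ^ 2) in *. set (S := sqrt (1 + t + t ^ 2)) in *.
  clearbody t x S.
  rewrite radicand, <- (Rsqr_pow2 (2 * x + t - S)), sqrt_Rsqr_abs.
  assert (factor : 1 - 20 * x ^ 3 - 8 * x ^ 6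
                   = - (2 * x ^ 2 + 2 * x - 1) * (4 * x ^ 4 - 4 * x ^ 3 + 6 * x ^ 2 + 2 * x + 1))
    by ring.
  assert (cofactor_pos : 0 < 4 * x ^ 4 - 4 * x ^ 3 + 6 * x ^ 2 + 2 * x + 1).
  { assert (0 <= 2 * x ^ 2 * (2 * x ^ 2 - 2 * x + 3)) by (apply Rmult_le_pos; nra). nra. }
  split; intros Hsign.
  - assert (2 * x ^ 2 + 2 * x - 1 <= 0) by nra.
    assert (2 * x + t - S <= 0) by nra.
    rewrite Rabs_left1 by lra. field.
  - assert (0 <= 2 * x ^ 2 + 2 * x - 1) by nra.
    assert (0 <= 2 * x + t - S) by nra.
    rewrite Rabs_pos_eq by lra. field.
Qed.

Theorem mainTheorem14 (sleaf3 : R -> R) (Hs : is_sleaf 3 sleaf3)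
  (m : Z) (l : R) :
  let s := sleaf3 l in
  let A := / 2 * sqrt (- 1 - s ^ 2 + 2 * s ^ 4
                       + (2 - 2 * s ^ 6) / sqrt (1 + s ^ 2 + s ^ 4)) in
  (pi_n 3 / 2 * (4 * IZR m - 1) <= l <= pi_n 3 / 2 * (4 * IZR m + 1) ->
     (sleaf3 (l / 2)) ^ 2 = - / 2 * s ^ 2 + / 2 * sqrt (1 + s ^ 2 + s ^ 4) - A) /\
  (pi_n 3 / 2 * (4 * IZR m + 1) <= l <= pi_n 3 / 2 * (4 * IZR m + 3) ->
     (sleaf3 (l / 2)) ^ 2 = - / 2 * s ^ 2 + / 2 * sqrt (1 + s ^ 2 + s ^ 4) + A).
Proof.
  destruct Hs as [p [r_derive [p_derive0 [r_0 p_0]]]].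
  assert (p_derive : forall x, is_derive p x (-3 * sleaf3 x ^ 5)).
  { intros x. replace (-3 * sleaf3 x ^ 5) with (- INR 3 * sleaf3 x ^ (2 * 3 - 1))
      by (simpl; ring). apply p_derive0. }
  destruct (leaf_first_zero _ _ r_derive p_derive r_0 p_0) as [T [T_pos [p_pos p_T]]].
  assert (half_pi3 : pi_n 3 / 2 = T).
  { unfold pi_n. change (fun t => / sqrt (1 - t ^ (2 * 3))) with pi3_integrand.
    rewrite (RInt_gen_pi3_integrand _ _ r_derive p_derive r_0 p_0 T T_pos p_pos p_T).
    field. }
  intros s A. rewrite half_pi3.
  destruct (leaf_p_sign _ _ r_derive p_derive r_0 p_0 T p_pos p_T m l) as [S1 S2].
  destruct (leaf_double _ _ r_derive p_derive r_0 p_0 (l / 2)) as [D1 D2].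
  replace (2 * (l / 2)) with l in D1, D2 by field.
  destruct (leaf3_half_sq _ _ _ (leaf_energy _ _ r_derive p_derive r_0 p_0 (l / 2)) D1)
    as [A1 A2].
  pose proof (double_scale_range sleaf3 (l / 2)) as [z_pos _].
  pose proof (pow_lt _ 3 z_pos).
  split; intros Hl; [apply A1 | apply A2].
  - pose proof (S1 Hl). rewrite D2 in *. nra.
  - pose proof (S2 Hl). rewrite D2 in *. nra.
Qed.
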